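(* Let $h$ and $k$ be relatively prime integers with $k>0$ and $h+k$ odd. Then $$B_{1}(h,k)=\frac{1-h}{2k}\sum_{j=1}^{k}\tan\left(\frac{\pi h(2j-1)}{2k}\right)\cot\left(\frac{\pi(2j-1)}{2k}\right).$$
   Context: $[x]$ denotes the greatest integer $\le x$. For integers $h,k$ with $k>0$ and $\gcd(h,k)=1$, $$B_{1}(h,k)=\sum_{j=1}^{k-1}(-1)^{j+\left[\frac{hj}{k}\right]}\left[\frac{hj}{k}\right].$$ *)

From Stdlib Require Import Reals ZArith List.
Open Scope R_scope.

(* [x] = floor; for k > 0, [h*j/k] = Z.div (h*j) k (Z.div rounds toward -oo). *)
Definition B1hk (h k : Z) : Z :=
  fold_right Z.add 0%Z
    (map (fun j : Z =>
            let q := Z.div (h * j) k in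
            ((if Z.even (j + q) then 1 else -1) * q)%Z)
         (map Z.of_nat (seq 1 (Z.to_nat (k - 1))))).

(* (-1)^(j+q) is written via parity, since Z.pow with a negative exponent is 0. *)

Definition cot (x : R) : R := cos x / sin x.

Definition sumR1 (k : Z) (f : Z -> R) : R :=
  fold_right Rplus 0 (map (fun n : nat => f (Z.of_nat n)) (seq 1 (Z.to_nat k))).

(** Put [t = PI (2j-1) / (2k)].  Since [2kt] is an odd multiple of [PI], the
    telescoping sums [2 sin t * sum_(m<k) sin(2mt)] and
    [2 cos(ht) * sum_(l<k) (-1)^(l+1) sin(2lht)] collapse (using that [h+k] is
    odd), expressing [cot t] and [tan(ht)] as trigonometric polynomials.
    Multiplying them out and summing over [j], only the terms
    [cos((2j-1) N PI / k)] with [k | N] survive, each contributing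
    [k (-1)^(N/k)]; as [h] is invertible mod [k], for each [l] exactly the two
    indices [m = +-hl mod k] survive, and the sum becomes
    [-k * sum_l (-1)^(l + [hl/k])].  Finally [l -> k - l] maps [[hl/k]] to
    [h - 1 - [hl/k]] and preserves the sign, so
    [2 B1(h,k) = (h-1) * sum_l (-1)^(l + [hl/k])]. *)

From Stdlib Require Import Reals ZArith List Lia Lra.
Open Scope R_scope.

Definition sum1 (N : nat) (f : nat -> R) : R := fold_right Rplus 0 (map f (seq 1 N)).

Lemma fold_right_Rplus_init l c : fold_right Rplus c l = fold_right Rplus 0 l + c.
Proof. induction l; simpl; lra. Qed.

Lemma sum1_0 f : sum1 0 f = 0.
Proof. reflexivity. Qed.

Lemma sum1_S N f : sum1 (S N) f = sum1 N f + f (S N).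
Proof.
  unfold sum1. rewrite seq_S, map_app, fold_right_app. simpl.
  rewrite fold_right_Rplus_init; lra.
Qed.

Lemma sum1_ext N f g : (forall i, (1 <= i <= N)%nat -> f i = g i) -> sum1 N f = sum1 N g.
Proof.
  induction N; intros H; [reflexivity|].
  rewrite !sum1_S, (H (S N)) by lia.
  rewrite IHN; [reflexivity|]. intros; apply H; lia.
Qed.

Lemma sum1_add N f g : sum1 N (fun i => f i + g i) = sum1 N f + sum1 N g.
Proof. induction N; [rewrite !sum1_0; lra | rewrite !sum1_S, IHN; lra]. Qed.

Lemma sum1_sub N f g : sum1 N (fun i => f i - g i) = sum1 N f - sum1 N g.
Proof. induction N; [rewrite !sum1_0; lra | rewrite !sum1_S, IHN; lra]. Qed.

Lemma sum1_mult_l N c f : sum1 N (fun i => c * f i) = c * sum1 N f.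
Proof. induction N; [rewrite !sum1_0; lra | rewrite !sum1_S, IHN; lra]. Qed.

Lemma sum1_const N c : sum1 N (fun _ => c) = INR N * c.
Proof. induction N; [rewrite sum1_0; simpl; lra | rewrite sum1_S, IHN, S_INR; lra]. Qed.

Lemma sum1_mult N M f g :
  sum1 N f * sum1 M g = sum1 N (fun i => sum1 M (fun j => f i * g j)).
Proof.
  induction N; [rewrite !sum1_0; ring|].
  rewrite !sum1_S, Rmult_plus_distr_r, IHN, sum1_mult_l. reflexivity.
Qed.

Lemma sum1_swap N M f :
  sum1 N (fun i => sum1 M (fun j => f i j)) = sum1 M (fun j => sum1 N (fun i => f i j)).
Proof.
  induction N.
  - rewrite sum1_0, (sum1_ext M _ (fun _ => 0)), sum1_const; [lra | reflexivity].
  - rewrite sum1_S, IHN, <- sum1_add. apply sum1_ext; intros; rewrite sum1_S; reflexivity.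
Qed.

Lemma sum1_single N f i0 : (1 <= i0 <= N)%nat ->
  (forall i, (1 <= i <= N)%nat -> i <> i0 -> f i = 0) -> sum1 N f = f i0.
Proof.
  induction N; intros Hi0 Hf; [lia|].
  rewrite sum1_S. destruct (Nat.eq_dec i0 (S N)) as [->|ne].
  - rewrite (sum1_ext N f (fun _ => 0)), sum1_const; [lra|].
    intros; apply Hf; lia.
  - rewrite IHN, (Hf (S N)); try lra; try lia. intros; apply Hf; lia.
Qed.

Lemma sum1_shift N f : sum1 (S N) f = f 1%nat + sum1 N (fun i => f (S i)).
Proof.
  induction N; [rewrite sum1_S, !sum1_0; lra|].
  rewrite sum1_S, IHN, sum1_S. lra.
Qed.

Lemma sum1_rev N f : sum1 N f = sum1 N (fun i => f (S N - i)%nat).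
Proof.
  revert f. induction N; intro f; [reflexivity|].
  rewrite sum1_shift, sum1_S, (IHN (fun i => f (S i))).
  replace (S (S N) - S N)%nat with 1%nat by lia.
  rewrite (sum1_ext N (fun i => f (S (S N - i))) (fun i => f (S (S N) - i)%nat)); [lra|].
  intros; f_equal; lia.
Qed.

(** * Signs [(-1)^z] *)

Definition sgn (z : Z) : R := if Z.even z then 1 else -1.

Lemma sgn_add a b : sgn (a + b) = sgn a * sgn b.
Proof. unfold sgn; rewrite Z.even_add; destruct (Z.even a), (Z.even b); simpl; lra. Qed.

Lemma sgn_1 : sgn 1 = -1.
Proof. reflexivity. Qed.

Lemma sgn_opp a : sgn (- a) = sgn a.
Proof. unfold sgn; rewrite Z.even_opp; reflexivity. Qed.

Lemma sgn_double a : sgn (2 * a) = 1.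
Proof. unfold sgn; rewrite Z.even_mul; reflexivity. Qed.

Lemma sgn_sqr a : sgn a * sgn a = 1.
Proof. unfold sgn; destruct (Z.even a); lra. Qed.

Lemma sgn_mul_odd a m : Z.even m = false -> sgn (a * m) = sgn a.
Proof. intro H; unfold sgn; rewrite Z.even_mul, H, Bool.orb_false_r; reflexivity. Qed.

Lemma even_double_sub1 a : Z.even (2 * a - 1) = false.
Proof. rewrite Z.even_sub, Z.even_mul; reflexivity. Qed.

Lemma sgn_succ_succ N : sgn (Z.of_nat (S N) + 1) = sgn (Z.of_nat N).
Proof. rewrite Nat2Z.inj_succ, <- Z.add_1_r, !sgn_add, sgn_1; ring. Qed.

Lemma sgn_pred n : (1 <= n)%nat -> sgn (Z.of_nat (n - 1)) = - sgn (Z.of_nat n).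
Proof.
  intro. rewrite Nat2Z.inj_sub by lia. unfold Z.sub.
  rewrite sgn_add, sgn_opp. change (sgn (Z.of_nat 1)) with (-1). ring.
Qed.

(** * Trigonometric sums *)

Lemma cos_IZR_mult_PI z : cos (IZR z * PI) = sgn z.
Proof.
  assert (Hnat : forall m, cos (INR m * PI) = sgn (Z.of_nat m)).
  { induction m; [simpl; rewrite Rmult_0_l, cos_0; reflexivity|].
    rewrite S_INR, Rmult_plus_distr_r, Rmult_1_l, neg_cos, IHm,
      Nat2Z.inj_succ, <- Z.add_1_r, sgn_add, sgn_1. ring. }
  destruct (Z_le_gt_dec 0 z).
  - rewrite <- (Z2Nat.id z l), <- INR_IZR_INZ. apply Hnat.
  - replace z with (- Z.of_nat (Z.to_nat (- z)))%Z by lia.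
    rewrite opp_IZR, <- INR_IZR_INZ, sgn_opp, <- Hnat, <- cos_neg. f_equal; ring.
Qed.

Lemma two_sin_mult_sin a b : 2 * sin a * sin b = cos (a - b) - cos (a + b).
Proof. rewrite cos_minus, cos_plus; ring. Qed.

Lemma two_cos_mult_sin a b : 2 * cos a * sin b = sin (b + a) + sin (b - a).
Proof. rewrite sin_minus, sin_plus; ring. Qed.

Lemma two_sin_mult_cos a b : 2 * sin a * cos b = sin (b + a) - sin (b - a).
Proof. rewrite sin_minus, sin_plus; ring. Qed.

Lemma sin_even_sum t N :
  2 * sin t * sum1 N (fun m => sin (2 * INR m * t)) = cos t - cos ((2 * INR N + 1) * t).
Proof.
  induction N.
  - rewrite sum1_0; simpl. replace ((2 * 0 + 1) * t) with t by ring. lra.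
  - rewrite sum1_S, Rmult_plus_distr_l, IHN, S_INR.
    rewrite (Rmult_comm (2 * sin t)), <- Rmult_assoc, (Rmult_comm _ 2), two_sin_mult_sin.
    replace (2 * (INR N + 1) * t - t) with ((2 * INR N + 1) * t) by ring.
    replace (2 * (INR N + 1) * t + t) with ((2 * (INR N + 1) + 1) * t) by ring. ring.
Qed.

Lemma alt_sin_even_sum p N :
  2 * cos p * sum1 N (fun l => sgn (Z.of_nat l + 1) * sin (2 * INR l * p))
  = sin p - sgn (Z.of_nat N) * sin ((2 * INR N + 1) * p).
Proof.
  induction N.
  - rewrite sum1_0; simpl. replace ((2 * 0 + 1) * p) with p by ring.
    change (sgn 0) with 1. lra.
  - rewrite sum1_S, Rmult_plus_distr_l, IHN, sgn_succ_succ, S_INR.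
    replace (2 * cos p * (sgn (Z.of_nat N) * sin (2 * (INR N + 1) * p))) with
      (sgn (Z.of_nat N) * (2 * cos p * sin (2 * (INR N + 1) * p))) by ring.
    rewrite two_cos_mult_sin.
    replace (2 * (INR N + 1) * p - p) with ((2 * INR N + 1) * p) by ring.
    replace (2 * (INR N + 1) * p + p) with ((2 * (INR N + 1) + 1) * p) by ring.
    rewrite Nat2Z.inj_succ, <- Z.add_1_r, sgn_add, sgn_1. ring.
Qed.

Lemma cos_odd_sum a J :
  2 * sin a * sum1 J (fun j => cos ((2 * INR j - 1) * a)) = sin (2 * INR J * a).
Proof.
  induction J.
  - rewrite sum1_0; simpl. replace (2 * 0 * a) with 0 by ring. rewrite sin_0. lra.
  - rewrite sum1_S, Rmult_plus_distr_l, IHJ, S_INR, two_sin_mult_cos.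
    replace ((2 * (INR J + 1) - 1) * a + a) with (2 * (INR J + 1) * a) by ring.
    replace ((2 * (INR J + 1) - 1) * a - a) with (2 * INR J * a) by ring. ring.
Qed.

Lemma cot_as_sin_sum n t : (1 <= n)%nat ->
  cos (2 * INR n * t) = -1 -> sin (2 * INR n * t) = 0 ->
  cos t / sin t = sum1 (n - 1) (fun m => sin (2 * INR m * t)).
Proof.
  intros Hn Hc Hs.
  pose proof (sin_even_sum t (n - 1)) as E.
  rewrite minus_INR in E by lia. simpl INR in E.
  replace ((2 * (INR n - 1) + 1) * t) with (2 * INR n * t - t) in E by ring.
  rewrite cos_minus, Hc, Hs in E.
  assert (St : sin t <> 0).
  { intro H0. rewrite H0 in E. pose proof (sin2_cos2 t) as P.
    unfold Rsqr in P. rewrite H0 in P. nra. }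
  apply (Rmult_eq_reg_l (2 * sin t)); [rewrite E; field; auto | lra].
Qed.

Lemma tan_as_alt_sin_sum n p : (1 <= n)%nat ->
  cos (2 * INR n * p) = - sgn (Z.of_nat n) -> sin (2 * INR n * p) = 0 ->
  sin p / cos p = sum1 (n - 1) (fun l => sgn (Z.of_nat l + 1) * sin (2 * INR l * p)).
Proof.
  intros Hn Hc Hs.
  pose proof (alt_sin_even_sum p (n - 1)) as E.
  rewrite minus_INR in E by lia. simpl INR in E.
  replace ((2 * (INR n - 1) + 1) * p) with (2 * INR n * p - p) in E by ring.
  rewrite sin_minus, Hc, Hs, sgn_pred in E by auto.
  assert (E2 : 2 * cos p * sum1 (n - 1)
      (fun l => sgn (Z.of_nat l + 1) * sin (2 * INR l * p)) = 2 * sin p).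
  { rewrite E. replace (- sgn (Z.of_nat n) * (0 * cos p - - sgn (Z.of_nat n) * sin p))
      with (- (sgn (Z.of_nat n) * sgn (Z.of_nat n)) * sin p) by ring.
    rewrite sgn_sqr. ring. }
  assert (Cp : cos p <> 0).
  { intro H0. rewrite H0 in E2. pose proof (sin2_cos2 p) as P.
    unfold Rsqr in P. rewrite H0 in P. nra. }
  apply (Rmult_eq_reg_l (2 * cos p)); [rewrite E2; field; auto | lra].
Qed.

Definition div_sign (n : nat) (N : Z) : R :=
  if Z.eqb (N mod Z.of_nat n) 0 then INR n * sgn (N / Z.of_nat n) else 0.

Lemma sum_cos_odd_multiples n N : (1 <= n)%nat ->
  sum1 n (fun j => cos ((2 * INR j - 1) * (IZR N * PI / INR n))) = div_sign n N.
Proof.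
  intros Hn. assert (nz : INR n <> 0) by (apply not_0_INR; lia).
  unfold div_sign. destruct (Z.eqb_spec (N mod Z.of_nat n) 0) as [H0|H0].
  - pose proof (Z.div_mod N (Z.of_nat n) ltac:(lia)) as D.
    rewrite H0, Z.add_0_r in D. set (q := (N / Z.of_nat n)%Z) in *.
    rewrite <- sum1_const. apply sum1_ext. intros j Hj.
    replace ((2 * INR j - 1) * (IZR N * PI / INR n))
      with (IZR (q * (2 * Z.of_nat j - 1)) * PI).
    + rewrite cos_IZR_mult_PI, sgn_mul_odd by apply even_double_sub1. reflexivity.
    + rewrite D, !mult_IZR, minus_IZR, mult_IZR, <- !INR_IZR_INZ. field. auto.
  - set (a := IZR N * PI / INR n).
    assert (Sa : sin a <> 0).
    { intro S0. apply sin_eq_0_0 in S0. destruct S0 as [t Ht]. unfold a in Ht.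
      assert (Nt : IZR N = IZR (t * Z.of_nat n)).
      { rewrite mult_IZR, <- INR_IZR_INZ. pose proof PI_RGT_0.
        apply (Rmult_eq_reg_r PI); [|lra].
        replace (IZR N * PI) with (IZR N * PI / INR n * INR n) by (field; auto).
        rewrite Ht. ring. }
      apply eq_IZR in Nt. apply H0. rewrite Nt. apply Z_mod_mult. }
    pose proof (cos_odd_sum a n) as E.
    rewrite (sin_eq_0_1 (2 * INR n * a)) in E.
    + apply (Rmult_eq_reg_l (2 * sin a)); [rewrite E; ring | lra].
    + exists (2 * N)%Z. unfold a. rewrite mult_IZR. field. auto.
Qed.

(** * The two residues [+-hl mod n] *)

Definition quo (h : Z) (n l : nat) : Z := (h * Z.of_nat l / Z.of_nat n)%Z.

Lemma mod_mult_coprime_neq0 n h l : (1 <= l <= n - 1)%nat -> Z.gcd h (Z.of_nat n) = 1%Z ->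
  ((h * Z.of_nat l) mod Z.of_nat n <> 0)%Z.
Proof.
  intros Hl G H. apply Z.mod_divide in H; [|lia].
  apply Z.gauss in H; [|rewrite Z.gcd_comm; auto].
  apply Z.divide_pos_le in H; lia.
Qed.

Lemma sum_div_sign_sub n h l : (1 <= l <= n - 1)%nat -> Z.gcd h (Z.of_nat n) = 1%Z ->
  sum1 (n - 1) (fun m => div_sign n (h * Z.of_nat l - Z.of_nat m)) = INR n * sgn (quo h n l).
Proof.
  intros Hl G. pose proof (mod_mult_coprime_neq0 n h l Hl G) as Nz.
  pose proof (Z.mod_pos_bound (h * Z.of_nat l) (Z.of_nat n) ltac:(lia)) as B.
  pose proof (Z.div_mod (h * Z.of_nat l) (Z.of_nat n) ltac:(lia)) as D.
  unfold quo. set (r := ((h * Z.of_nat l) mod Z.of_nat n)%Z) in *.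
  set (q := ((h * Z.of_nat l) / Z.of_nat n)%Z) in *.
  rewrite (sum1_single _ _ (Z.to_nat r)); [| lia |].
  - unfold div_sign. rewrite Z2Nat.id by lia.
    replace (h * Z.of_nat l - r)%Z with (q * Z.of_nat n)%Z by lia.
    rewrite Z_mod_mult, Z.div_mul by lia. reflexivity.
  - intros i Hi Hne. unfold div_sign.
    destruct (Z.eqb_spec ((h * Z.of_nat l - Z.of_nat i) mod Z.of_nat n) 0) as [E|E];
      [|reflexivity].
    exfalso. apply Z.mod_divide in E; [|lia]. destruct E as [t Ht].
    assert (t - q = 0)%Z by nia. lia.
Qed.

Lemma sum_div_sign_add n h l : (1 <= l <= n - 1)%nat -> Z.gcd h (Z.of_nat n) = 1%Z ->
  sum1 (n - 1) (fun m => div_sign n (h * Z.of_nat l + Z.of_nat m)) = INR n * sgn (quo h n l + 1).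
Proof.
  intros Hl G. pose proof (mod_mult_coprime_neq0 n h l Hl G) as Nz.
  pose proof (Z.mod_pos_bound (h * Z.of_nat l) (Z.of_nat n) ltac:(lia)) as B.
  pose proof (Z.div_mod (h * Z.of_nat l) (Z.of_nat n) ltac:(lia)) as D.
  unfold quo. set (r := ((h * Z.of_nat l) mod Z.of_nat n)%Z) in *.
  set (q := ((h * Z.of_nat l) / Z.of_nat n)%Z) in *.
  rewrite (sum1_single _ _ (Z.to_nat (Z.of_nat n - r))); [| lia |].
  - unfold div_sign. rewrite Z2Nat.id by lia.
    replace (h * Z.of_nat l + (Z.of_nat n - r))%Z with ((q + 1) * Z.of_nat n)%Z by lia.
    rewrite Z_mod_mult, Z.div_mul by lia. reflexivity.
  - intros i Hi Hne. unfold div_sign.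
    destruct (Z.eqb_spec ((h * Z.of_nat l + Z.of_nat i) mod Z.of_nat n) 0) as [E|E];
      [|reflexivity].
    exfalso. apply Z.mod_divide in E; [|lia]. destruct E as [t Ht].
    assert (t - q = 1)%Z by nia. lia.
Qed.

Lemma quo_reflect n h l : (1 <= l <= n - 1)%nat -> Z.gcd h (Z.of_nat n) = 1%Z ->
  quo h n (n - l) = (h - 1 - quo h n l)%Z.
Proof.
  intros Hl G. unfold quo. rewrite Nat2Z.inj_sub by lia.
  replace (h * (Z.of_nat n - Z.of_nat l))%Z
    with (h * Z.of_nat n + - (h * Z.of_nat l))%Z by ring.
  rewrite Z.div_add_l, Z_div_nz_opp_full by (try apply mod_mult_coprime_neq0; auto; lia).
  lia.
Qed.

(** * Both sides as sums over [l] *)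

Lemma tan_cot_expand n h j : (1 <= n)%nat -> (1 <= j <= n)%nat -> sgn h = - sgn (Z.of_nat n) ->
  tan (PI * IZR h * (2 * IZR (Z.of_nat j) - 1) / (2 * IZR (Z.of_nat n))) *
  cot (PI * (2 * IZR (Z.of_nat j) - 1) / (2 * IZR (Z.of_nat n))) =
  sum1 (n - 1) (fun l => sum1 (n - 1) (fun m => sgn (Z.of_nat l + 1) / 2 *
     (cos ((2 * INR j - 1) * (IZR (h * Z.of_nat l - Z.of_nat m) * PI / INR n)) -
      cos ((2 * INR j - 1) * (IZR (h * Z.of_nat l + Z.of_nat m) * PI / INR n))))).
Proof.
  intros Hn Hj Hs. assert (nz : INR n <> 0) by (apply not_0_INR; lia).
  rewrite <- !INR_IZR_INZ.
  set (t := PI * (2 * INR j - 1) / (2 * INR n)).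
  replace (PI * IZR h * (2 * INR j - 1) / (2 * INR n)) with (IZR h * t)
    by (unfold t; field; auto).
  assert (E1 : 2 * INR n * t = IZR (2 * Z.of_nat j - 1) * PI)
    by (rewrite minus_IZR, mult_IZR, <- INR_IZR_INZ; unfold t; field; auto).
  assert (E2 : 2 * INR n * (IZR h * t) = IZR (h * (2 * Z.of_nat j - 1)) * PI)
    by (rewrite mult_IZR, minus_IZR, mult_IZR, <- INR_IZR_INZ; unfold t; field; auto).
  unfold tan, cot.
  rewrite (cot_as_sin_sum n t), (tan_as_alt_sin_sum n (IZR h * t)), sum1_mult; auto.
  - apply sum1_ext. intros l Hl. apply sum1_ext. intros m Hm.
    replace (sgn (Z.of_nat l + 1) * sin (2 * INR l * (IZR h * t)) * sin (2 * INR m * t))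
      with (sgn (Z.of_nat l + 1) / 2 * (2 * sin (2 * INR l * (IZR h * t)) * sin (2 * INR m * t)))
      by field.
    rewrite two_sin_mult_sin. f_equal. f_equal; f_equal;
      rewrite ?plus_IZR, ?minus_IZR, mult_IZR, <- !INR_IZR_INZ; unfold t; field; auto.
  - rewrite E2, cos_IZR_mult_PI, sgn_mul_odd by apply even_double_sub1. auto.
  - apply sin_eq_0_1. eauto.
  - rewrite E1, cos_IZR_mult_PI. unfold sgn. rewrite even_double_sub1. reflexivity.
  - apply sin_eq_0_1. eauto.
Qed.

Lemma sum_tan_cot n h : (1 <= n)%nat -> Z.gcd h (Z.of_nat n) = 1%Z ->
  sgn h = - sgn (Z.of_nat n) ->
  sumR1 (Z.of_nat n) (fun j =>
      tan (PI * IZR h * (2 * IZR j - 1) / (2 * IZR (Z.of_nat n))) *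
      cot (PI * (2 * IZR j - 1) / (2 * IZR (Z.of_nat n)))) =
  - INR n * sum1 (n - 1) (fun l => sgn (Z.of_nat l + quo h n l)).
Proof.
  intros Hn G Hs. unfold sumR1. rewrite Nat2Z.id. fold (sum1 n (fun j : nat =>
      tan (PI * IZR h * (2 * IZR (Z.of_nat j) - 1) / (2 * IZR (Z.of_nat n))) *
      cot (PI * (2 * IZR (Z.of_nat j) - 1) / (2 * IZR (Z.of_nat n))))).
  rewrite (sum1_ext n _ _ (fun j Hj => tan_cot_expand n h j Hn Hj Hs)).
  rewrite <- sum1_mult_l, sum1_swap. apply sum1_ext. intros l Hl.
  rewrite sum1_swap.
  rewrite (sum1_ext (n - 1) _ (fun m => sgn (Z.of_nat l + 1) / 2 *
       (div_sign n (h * Z.of_nat l - Z.of_nat m) - div_sign n (h * Z.of_nat l + Z.of_nat m)))).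
  - rewrite sum1_mult_l, sum1_sub, sum_div_sign_sub, sum_div_sign_add by auto.
    rewrite !sgn_add, sgn_1. field.
  - intros m Hm. rewrite sum1_mult_l, sum1_sub, !sum_cos_odd_multiples by auto. reflexivity.
Qed.

Lemma B1hk_as_sum h n :
  IZR (B1hk h (Z.of_nat n)) = sum1 (n - 1) (fun l => sgn (Z.of_nat l + quo h n l) * IZR (quo h n l)).
Proof.
  unfold B1hk. replace (Z.to_nat (Z.of_nat n - 1)) with (n - 1)%nat by lia.
  unfold sum1. induction (seq 1 (n - 1)) as [|l L IH]; [reflexivity|].
  simpl. rewrite plus_IZR, IH, mult_IZR. unfold sgn, quo. destruct (Z.even _); reflexivity.
Qed.

Lemma sum_sign_quo_reflect n h : (1 <= n)%nat -> Z.gcd h (Z.of_nat n) = 1%Z ->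
  sgn (h + Z.of_nat n) = -1 ->
  2 * sum1 (n - 1) (fun l => sgn (Z.of_nat l + quo h n l) * IZR (quo h n l)) =
  (IZR h - 1) * sum1 (n - 1) (fun l => sgn (Z.of_nat l + quo h n l)).
Proof.
  intros Hn G Hs.
  set (Q := sum1 (n - 1) (fun l => sgn (Z.of_nat l + quo h n l) * IZR (quo h n l))).
  assert (Rev : Q = sum1 (n - 1)
      (fun l => sgn (Z.of_nat l + quo h n l) * (IZR h - 1 - IZR (quo h n l)))).
  { unfold Q. rewrite sum1_rev. replace (S (n - 1)) with n by lia.
    apply sum1_ext. intros i Hi.
    rewrite quo_reflect, !minus_IZR by auto. f_equal.
    replace (Z.of_nat (n - i) + (h - 1 - quo h n i))%Z with
      ((Z.of_nat i + quo h n i) + (h + Z.of_nat n) + 2 * (- Z.of_nat i - quo h n i) + -1)%Z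
      by lia.
    rewrite (sgn_add _ (-1)), (sgn_add _ (2 * _)), (sgn_add _ (h + Z.of_nat n)), Hs, sgn_double.
    change (sgn (-1)) with (-1). ring. }
  replace (2 * Q) with (Q + Q) by ring. rewrite Rev at 2.
  unfold Q. rewrite <- sum1_add, <- sum1_mult_l. apply sum1_ext. intros; ring.
Qed.

Theorem theorem23 (h k : Z) :
  (0 < k)%Z -> Z.gcd h k = 1%Z -> Z.odd (Z.add h k) = true ->
  IZR (B1hk h k) =
    (1 - IZR h) / (2 * IZR k) *
    sumR1 k (fun j =>
      tan (PI * IZR h * (2 * IZR j - 1) / (2 * IZR k)) *
      cot (PI * (2 * IZR j - 1) / (2 * IZR k))).
Proof.
  intros Hk G Odd.
  destruct (Z_of_nat_complete k) as [n ->]; [lia|].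
  assert (Hn : (1 <= n)%nat) by lia.
  assert (nz : INR n <> 0) by (apply not_0_INR; lia).
  assert (Hs : sgn (h + Z.of_nat n) = -1)
    by (unfold sgn; rewrite <- Z.negb_odd, Odd; reflexivity).
  assert (Hs' : sgn h = - sgn (Z.of_nat n))
    by (rewrite sgn_add in Hs; pose proof (sgn_sqr (Z.of_nat n)); nra).
  rewrite B1hk_as_sum, sum_tan_cot, <- INR_IZR_INZ by auto.
  apply (Rmult_eq_reg_l 2); [|lra].
  rewrite sum_sign_quo_reflect by auto. field. auto.
Qed.
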